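(* Let $(\mathcal{P},+)$ be a reparametrization category and let $D,E$ be $\mathcal{P}$-spaces. There is a natural homeomorphism \[\varinjlim(D\otimes E)\cong\varinjlim D\times\varinjlim E.\]
   Context: All enriched categories are enriched over the cartesian closed category $\mathbf{Top}$ of ($\Delta$-generated) topological spaces. A reparametrization category is a small enriched semimonoidal category $(\mathcal{P},\otimes)$ (hom-sets are spaces, composition and $\mathcal{P}(a,b)\times\mathcal{P}(c,d)\to\mathcal{P}(a\otimes c,b\otimes d)$ continuous) such that: (1) the semimonoidal structure is strict; (2) all spaces $\mathcal{P}(\ell,\ell')$ are contractible; (3) for every map $\phi:\ell\to\ell'$ and all objects $\ell'_1,\ell'_2$ with $\ell'_1\otimes\ell'_2=\ell'$, there exist maps $\phi_1:\ell_1\to\ell'_1$, $\phi_2:\ell_2\to\ell'_2$ with $\phi=\phi_1\otimes\phi_2$. One writes $\ell+\ell':=\ell\otimes\ell'$ on objects. A $\mathcal{P}$-space is an enriched functor $\mathcal{P}^{op}\to\mathbf{Top}$; $\varinjlim$ denotes the colimit in $\mathbf{Top}$ of the diagram. The tensor product is $D\otimes E=\int^{(\ell_1,\ell_2)}\mathcal{P}(-,\ell_1+\ell_2)\times D(\ell_1)\times E(\ell_2)$. *)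

From Stdlib Require Import Reals ClassicalEpsilon FunctionalExtensionality
  PropExtensionality ProofIrrelevance.
Open Scope R_scope.

Record space := Space { carrier :> Type; opens : (carrier -> Prop) -> Prop }.

Definition is_topology (X : space) : Prop :=
  opens X (fun _ => True) /\
  (forall U V, opens X U -> opens X V -> opens X (fun x => U x /\ V x)) /\
  (forall (I : Type) (U : I -> X -> Prop),
      (forall i, opens X (U i)) -> opens X (fun x => exists i, U i x)).

Definition continuous (X Y : space) (f : X -> Y) : Prop :=
  forall U, opens Y U -> opens X (fun x => U (f x)).

Definition homeomorphism (X Y : space) (f : X -> Y) : Prop :=
  exists g : Y -> X, (forall x, g (f x) = x) /\ (forall y, f (g y) = y) /\
    continuous X Y f /\ continuous Y X g.

Definition simplex_pt (n : nat) : Type :=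
  {x : nat -> R | (forall i, (i <= n)%nat -> 0 <= x i) /\
                  (forall i, (n < i)%nat -> x i = 0) /\ sum_f_R0 x n = 1}.

Definition simplex (n : nat) : space :=
  Space (simplex_pt n) (fun U => forall p, U p -> exists eps, 0 < eps /\
    forall q : simplex_pt n,
      (forall i, (i <= n)%nat -> Rabs (proj1_sig q i - proj1_sig p i) < eps) -> U q).

Definition interval_pt : Type := {t : R | 0 <= t <= 1}.
Definition unit_interval : space :=
  Space interval_pt (fun U => forall p, U p -> exists eps, 0 < eps /\
    forall q : interval_pt, Rabs (proj1_sig q - proj1_sig p) < eps -> U q).
Definition I0 : interval_pt := exist _ 0 (conj (Rle_refl 0) Rle_0_1).
Definition I1 : interval_pt := exist _ 1 (conj Rle_0_1 (Rle_refl 1)).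

Definition delta_opens (X : space) (U : X -> Prop) : Prop :=
  forall (n : nat) (s : simplex n -> X),
    continuous (simplex n) X s -> opens (simplex n) (fun p => U (s p)).

Definition deltaify (X : space) : space := Space X (delta_opens X).

Definition delta_generated (X : space) : Prop :=
  is_topology X /\ (forall U, delta_opens X U -> opens X U).

Definition prod_space (X Y : space) : space :=
  Space (X * Y)%type (fun U => forall p, U p -> exists A B,
    opens X A /\ opens Y B /\ A (fst p) /\ B (snd p) /\
    forall q : X * Y, A (fst q) -> B (snd q) -> U q).

Definition dprod (X Y : space) : space := deltaify (prod_space X Y).

Definition sum_space (I : Type) (X : I -> space) : space :=
  Space (sigT (fun i => carrier (X i)))
        (fun U => forall i, opens (X i) (fun x => U (existT _ i x))).

Inductive eqclos {X : Type} (R : X -> X -> Prop) : X -> X -> Prop :=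
| ec_base x y : R x y -> eqclos R x y
| ec_refl x : eqclos R x x
| ec_sym x y : eqclos R x y -> eqclos R y x
| ec_trans x y z : eqclos R x y -> eqclos R y z -> eqclos R x z.

Definition canon {X : Type} (R : X -> X -> Prop) (x : X) : X :=
  epsilon (inhabits x) (eqclos R x).

Lemma canon_spec {X : Type} (R : X -> X -> Prop) (x : X) : eqclos R x (canon R x).
Proof. unfold canon. apply epsilon_spec. exists x. apply ec_refl. Qed.

Lemma canon_eq {X : Type} (R : X -> X -> Prop) (x y : X) :
  eqclos R x y -> canon R x = canon R y.
Proof.
  intros H. unfold canon.
  assert (E : eqclos R x = eqclos R y).
  { apply functional_extensionality; intro z; apply propositional_extensionality;
    split; intro Hz.
    - eapply ec_trans; [apply ec_sym; exact H | exact Hz].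
    - eapply ec_trans; [exact H | exact Hz]. }
  rewrite E. f_equal. apply proof_irrelevance.
Qed.

Lemma canon_idem {X : Type} (R : X -> X -> Prop) (x : X) :
  canon R (canon R x) = canon R x.
Proof. symmetry. apply canon_eq. apply canon_spec. Qed.

Definition quot {X : Type} (R : X -> X -> Prop) : Type := {x : X | canon R x = x}.

Definition cls {X : Type} (R : X -> X -> Prop) (x : X) : quot R :=
  exist _ (canon R x) (canon_idem R x).

Definition qspace (S : space) (R : S -> S -> Prop) : space :=
  Space (quot R) (fun U => opens S (fun x => U (cls R x))).

Record rcat := RCat {
  obj : Type;
  hom : obj -> obj -> space;
  comp : forall a b c : obj, hom b c -> hom a b -> hom a c;
  idm : forall a : obj, hom a a;
  tens : obj -> obj -> obj;
  tensm : forall a b c d : obj, hom a b -> hom c d -> hom (tens a c) (tens b d) }.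

Arguments obj : clear implicits.
Arguments hom {_}.
Arguments comp {_ a b c}.
Arguments idm {_}.
Arguments tens {_}.
Arguments tensm {_ a b c d}.

Definition castH {P : rcat} {a a' b b' : obj P} (e1 : a = a') (e2 : b = b')
  (f : hom a b) : hom a' b' :=
  eq_rect b (fun y => hom a' y) (eq_rect a (fun x => hom x b) f a' e1) b' e2.

Definition contractible (X : space) : Prop :=
  exists (x0 : X) (H : dprod unit_interval X -> X),
    continuous (dprod unit_interval X) X H /\
    (forall x, H (I0, x) = x) /\ (forall x, H (I1, x) = x0).

Definition is_reparam (P : rcat) : Prop :=
  (forall a b : obj P, delta_generated (hom a b)) /\
  (forall (a b c d : obj P) (f : hom a b) (g : hom b c) (h : hom c d),
      comp h (comp g f) = comp (comp h g) f) /\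
  (forall (a b : obj P) (f : hom a b), comp (idm b) f = f) /\
  (forall (a b : obj P) (f : hom a b), comp f (idm a) = f) /\
  (forall a b c : obj P,
      continuous (dprod (hom b c) (hom a b)) (hom a c) (fun p => comp (fst p) (snd p))) /\
  (forall a b c d : obj P,
      continuous (dprod (hom a b) (hom c d)) (hom (tens a c) (tens b d))
                 (fun p => tensm (fst p) (snd p))) /\
  (forall a b : obj P, tensm (idm a) (idm b) = idm (tens a b)) /\
  (forall (a b c a' b' c' : obj P) (f : hom b c) (g : hom a b) (f' : hom b' c') (g' : hom a' b'),
      comp (tensm f f') (tensm g g') = tensm (comp f g) (comp f' g')) /\
  (* (1) strictness *)
  (forall a b c : obj P, tens (tens a b) c = tens a (tens b c)) /\
  (forall (a b c d e f : obj P) (x : hom a b) (y : hom c d) (z : hom e f)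
     (e1 : tens (tens a c) e = tens a (tens c e))
     (e2 : tens (tens b d) f = tens b (tens d f)),
      castH e1 e2 (tensm (tensm x y) z) = tensm x (tensm y z)) /\
  (* (2) contractible hom-spaces *)
  (forall a b : obj P, contractible (hom a b)) /\
  (* (3) splitting of maps *)
  (forall (l l' : obj P) (phi : hom l l') (l1' l2' : obj P) (e : tens l1' l2' = l'),
      exists (l1 l2 : obj P) (e0 : tens l1 l2 = l) (phi1 : hom l1 l1') (phi2 : hom l2 l2'),
        phi = castH e0 e (tensm phi1 phi2)).

Record pspace (P : rcat) := PSpace {
  pob : obj P -> space;
  pact : forall a b : obj P, hom a b -> pob b -> pob a }.

Arguments pob {_}.
Arguments pact {_} _ {a b}.

Definition is_pspace {P : rcat} (D : pspace P) : Prop :=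
  (forall l, delta_generated (pob D l)) /\
  (forall a b : obj P,
      continuous (dprod (hom a b) (pob D b)) (pob D a) (fun p => pact D (fst p) (snd p))) /\
  (forall a (x : pob D a), pact D (idm a) x = x) /\
  (forall a b c (f : hom a b) (g : hom b c) (x : pob D c),
      pact D (comp g f) x = pact D f (pact D g x)).

Definition is_pmorph {P : rcat} (D D' : pspace P) (eta : forall l, pob D l -> pob D' l)
  : Prop :=
  (forall l, continuous (pob D l) (pob D' l) (eta l)) /\
  (forall a b (f : hom a b) (x : pob D b), eta a (pact D f x) = pact D' f (eta b x)).

Definition colim_rel {P : rcat} (D : pspace P) :
  sum_space (obj P) (pob D) -> sum_space (obj P) (pob D) -> Prop :=
  fun u v => exists (a b : obj P) (f : hom a b) (x : pob D b),
    u = existT _ a (pact D f x) /\ v = existT _ b x.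

Definition colim {P : rcat} (D : pspace P) : space :=
  qspace (sum_space (obj P) (pob D)) (colim_rel D).

Definition colim_map {P : rcat} {D D' : pspace P} (eta : forall l, pob D l -> pob D' l)
  (q : colim D) : colim D' :=
  cls (colim_rel D')
    (match proj1_sig q with existT _ l x => existT _ l (eta l x) end).

(* Tensor product  (D ⊗ E)(l) = ∫^{(l1,l2)} P(l, l1+l2) × D(l1) × E(l2)     *)

Section Tensor.
Context {P : rcat} (D E : pspace P).

Definition tpiece (l : obj P) (p : obj P * obj P) : space :=
  dprod (dprod (hom l (tens (fst p) (snd p))) (pob D (fst p))) (pob E (snd p)).

Definition tens_rel (l : obj P) :
  sum_space _ (tpiece l) -> sum_space _ (tpiece l) -> Prop :=
  fun u v => exists (l1 l2 l1' l2' : obj P) (al : hom l1 l1') (be : hom l2 l2')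
      (phi : hom l (tens l1 l2)) (x : pob D l1') (y : pob E l2'),
    u = existT (fun p => carrier (tpiece l p)) (l1', l2')
               ((comp (tensm al be) phi, x), y) /\
    v = existT (fun p => carrier (tpiece l p)) (l1, l2)
               ((phi, pact D al x), pact E be y).

Definition tens_ob (l : obj P) : space :=
  qspace (sum_space _ (tpiece l)) (tens_rel l).

Definition tens_act (a b : obj P) (psi : hom a b) (q : tens_ob b) : tens_ob a :=
  cls (tens_rel a)
    (match proj1_sig q with
     | existT _ p t =>
         existT (fun p => carrier (tpiece a p)) p
                ((comp (fst (fst t)) psi, snd (fst t)), snd t)
     end).

Definition ptensor : pspace P := PSpace P tens_ob tens_act.

End Tensor.

Definition tens_map {P : rcat} {D D' E E' : pspace P}
  (eta : forall l, pob D l -> pob D' l) (theta : forall l, pob E l -> pob E' l)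
  (l : obj P) (q : pob (ptensor D E) l) : pob (ptensor D' E') l :=
  cls (tens_rel D' E' l)
    (match proj1_sig q with
     | existT _ p t =>
         existT (fun p => carrier (tpiece D' E' l p)) p
                ((fst (fst t), eta (fst p) (snd (fst t))), theta (snd p) (snd t))
     end).

(* The comparison map sends the class of [(phi, x, y)] in (D ⊗ E)(l) to the
   pair of classes of [x] and [y]; its inverse sends the pair of classes of
   [x : D l1] and [y : E l2] to the class of [(id, x, y)] in (D ⊗ E)(l1 + l2).
   Both are well defined: in the colimit, [(phi, x, y)] is identified with
   [(id, x, y)] through the action of [phi], and the coend relation identifies
   [(alpha ⊗ beta, x, y)] with [(id, alpha x, beta y)].
   Continuity of the inverse is the topological content: in Delta-generated
   spaces a product of quotient maps is a quotient map.  Testing against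
   singular simplices reduces this to products with a simplex, which preserve
   quotient maps by the tube lemma (simplices are compact), and to the fact
   that a product of two simplices is Delta-generated, being a retract of a
   simplex. *)

From Pilot Require Import Defs.
From Stdlib Require Import Arith Reals Lra Lia ClassicalEpsilon
  FunctionalExtensionality PropExtensionality ProofIrrelevance Classical.
Open Scope R_scope.

Lemma opens_ext (X : space) (U V : X -> Prop) :
  opens X U -> (forall x, U x <-> V x) -> opens X V.
Proof.
  intros HU HUV.
  replace V with U; [exact HU|].
  apply functional_extensionality; intro x; apply propositional_extensionality, HUV.
Qed.

Lemma open_of_locally_open (X : space) (U : X -> Prop) : is_topology X ->
  (forall x, U x -> exists V, opens X V /\ V x /\ forall y, V y -> U y) -> opens X U.
Proof.
  intros (_ & _ & Hunion) Hloc.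
  assert (Hnbhd : forall p : {x | U x}, {V | opens X V /\ V (proj1_sig p) /\
                                            forall y, V y -> U y}).
  { intro p. apply constructive_indefinite_description, Hloc, proj2_sig. }
  apply opens_ext with (fun x => exists p, proj1_sig (Hnbhd p) x).
  - apply Hunion. intro p. apply (proj2_sig (Hnbhd p)).
  - intro x; split.
    + intros [p Hp]. apply (proj2_sig (Hnbhd p)), Hp.
    + intro Hx. exists (exist _ x Hx). apply (proj2_sig (Hnbhd (exist _ x Hx))).
Qed.

Lemma continuous_id (X : space) : continuous X X (fun x => x).
Proof. intros U HU; exact HU. Qed.

Lemma continuous_comp (X Y Z : space) (f : X -> Y) (g : Y -> Z) :
  continuous X Y f -> continuous Y Z g -> continuous X Z (fun x => g (f x)).
Proof. intros Hf Hg U HU. apply (Hf (fun y => U (g y))), Hg, HU. Qed.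

Lemma continuous_fst (X Y : space) :
  opens Y (fun _ => True) -> continuous (prod_space X Y) X fst.
Proof. intros HY U HU [x y] Hx. exists U, (fun _ => True). simpl in *. tauto. Qed.

Lemma continuous_snd (X Y : space) :
  opens X (fun _ => True) -> continuous (prod_space X Y) Y snd.
Proof. intros HX U HU [x y] Hy. exists (fun _ => True), U. simpl in *. tauto. Qed.

Lemma continuous_prod_map (X Y X' Y' : space) (f : X -> X') (g : Y -> Y') :
  continuous X X' f -> continuous Y Y' g ->
  continuous (prod_space X Y) (prod_space X' Y') (fun p => (f (fst p), g (snd p))).
Proof.
  intros Hf Hg O HO [x y] Hxy.
  destruct (HO _ Hxy) as (A & B & HA & HB & Ha & Hb & HAB).
  exists (fun x => A (f x)), (fun y => B (g y)).
  repeat split; auto.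
Qed.

Lemma opens_prod_swap (X Y : space) (O : X * Y -> Prop) :
  opens (prod_space X Y) O -> opens (prod_space Y X) (fun p => O (snd p, fst p)).
Proof.
  intros HO [y x] Hxy. destruct (HO (x, y) Hxy) as (A & B & HA & HB & Ha & Hb & HAB).
  exists B, A. repeat split; auto.
Qed.

Lemma continuous_deltaify_l (X Y : space) (f : X -> Y) :
  continuous X Y f -> continuous (deltaify X) Y f.
Proof. intros Hf U HU n s Hs. apply (Hs (fun x => U (f x))), Hf, HU. Qed.

Lemma continuous_simplex_deltaify (n : nat) (X : space) (s : simplex n -> X) :
  continuous (simplex n) X s -> continuous (simplex n) (deltaify X) s.
Proof. intros Hs U HU. apply HU, Hs. Qed.

Lemma opens_full_of_delta_generated (X : space) :
  delta_generated X -> opens X (fun _ => True).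
Proof. intros [[Hfull _] _]. exact Hfull. Qed.

(** * Simplices *)

Definition sball (n : nat) (p : nat -> R) (r : R) (q : nat -> R) : Prop :=
  forall i, (i <= n)%nat -> Rabs (q i - p i) < r.

Lemma sball_center (n : nat) (p : nat -> R) (r : R) : 0 < r -> sball n p r p.
Proof. intros Hr i _. unfold Rminus. rewrite Rplus_opp_r, Rabs_R0. exact Hr. Qed.

Lemma finite_max_lt (n : nat) (f : nat -> R) (r : R) :
  (forall i, (i <= n)%nat -> f i < r) ->
  exists M, M < r /\ forall i, (i <= n)%nat -> f i <= M.
Proof.
  induction n as [|n IH]; intros Hf.
  - exists (f 0%nat). split; [apply Hf; lia|].
    intros i Hi. replace i with 0%nat by lia. lra.
  - destruct IH as [M [HMr HM]]; [intros; apply Hf; lia|].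
    exists (Rmax M (f (S n))). split; [apply Rmax_lub_lt; auto|].
    intros i Hi. destruct (Nat.eq_dec i (S n)) as [->|Hne]; [apply Rmax_r|].
    eapply Rle_trans; [apply HM; lia|apply Rmax_l].
Qed.

Lemma sball_open (n : nat) (p : simplex_pt n) (r : R) :
  opens (simplex n) (fun q => sball n (proj1_sig p) r (proj1_sig q)).
Proof.
  intros q Hq.
  destruct (finite_max_lt n (fun i => Rabs (proj1_sig q i - proj1_sig p i)) r Hq)
    as [M [HMr HM]].
  exists (r - M). split; [lra|]. intros q' Hq' i Hi.
  specialize (Hq' i Hi). specialize (HM i Hi). simpl in HM.
  replace (proj1_sig q' i - proj1_sig p i) with
    ((proj1_sig q' i - proj1_sig q i) + (proj1_sig q i - proj1_sig p i)) by ring.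
  eapply Rle_lt_trans; [apply Rabs_triang|]. lra.
Qed.

Lemma sball_min_l (n : nat) (p q : nat -> R) (r1 r2 : R) :
  sball n p (Rmin r1 r2) q -> sball n p r1 q.
Proof. intros H i Hi. eapply Rlt_le_trans; [apply H, Hi|apply Rmin_l]. Qed.

Lemma sball_min_r (n : nat) (p q : nat -> R) (r1 r2 : R) :
  sball n p (Rmin r1 r2) q -> sball n p r2 q.
Proof. intros H i Hi. eapply Rlt_le_trans; [apply H, Hi|apply Rmin_r]. Qed.

Lemma simplex_topology (n : nat) : is_topology (simplex n).
Proof.
  split; [|split].
  - intros p _. exists 1. split; [lra|]. auto.
  - intros U V HU HV p [Hu Hv].
    destruct (HU p Hu) as [e1 [He1 H1]]. destruct (HV p Hv) as [e2 [He2 H2]].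
    exists (Rmin e1 e2). split; [apply Rmin_pos; auto|].
    intros q Hq. split; [apply H1, (sball_min_l n _ _ _ e2) | apply H2, (sball_min_r n _ _ e1)];
      exact Hq.
  - intros I U HU p [i Hi]. destruct (HU i p Hi) as [e [He H]].
    exists e. split; auto. intros q Hq. exists i. auto.
Qed.

Lemma opens_deltaify_full (X : space) : opens (deltaify X) (fun _ => True).
Proof. intros n s _. apply simplex_topology. Qed.

Lemma continuous_simplex_const (n : nat) (X : space) (c : X) :
  continuous (simplex n) X (fun _ => c).
Proof. intros U HU p Hp. exists 1. split; [lra|]. intros; exact Hp. Qed.

Lemma continuous_simplex_pair (n : nat) (X Y : space) (f : simplex n -> X) (g : simplex n -> Y) :
  continuous _ _ f -> continuous _ _ g ->
  continuous (simplex n) (prod_space X Y) (fun u => (f u, g u)).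
Proof.
  intros Hf Hg O HO u Hu. destruct (HO _ Hu) as (A & B & HA & HB & Ha & Hb & HAB).
  destruct (Hf A HA u Ha) as [e1 [He1 H1]]. destruct (Hg B HB u Hb) as [e2 [He2 H2]].
  exists (Rmin e1 e2). split; [apply Rmin_pos; auto|].
  intros q Hq. apply HAB; [apply H1, (sball_min_l n _ _ _ e2) | apply H2, (sball_min_r n _ _ e1)];
    exact Hq.
Qed.

Lemma simplex_pt_eq (n : nat) (p q : simplex_pt n) : proj1_sig p = proj1_sig q -> p = q.
Proof. destruct p, q; simpl; intros ->; f_equal; apply proof_irrelevance. Qed.

Lemma sum_f_R0_nonneg (f : nat -> R) (n : nat) :
  (forall i, (i <= n)%nat -> 0 <= f i) -> 0 <= sum_f_R0 f n.
Proof.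
  induction n as [|n IH]; intros Hf; simpl; [apply Hf; lia|].
  pose proof (IH (fun i Hi => Hf i ltac:(lia))). pose proof (Hf (S n) (le_n _)). lra.
Qed.

Lemma sum_f_R0_term_le (f : nat -> R) (n i : nat) :
  (forall j, (j <= n)%nat -> 0 <= f j) -> (i <= n)%nat -> f i <= sum_f_R0 f n.
Proof.
  induction n as [|n IH]; intros Hf Hi; simpl.
  - replace i with 0%nat by lia. lra.
  - pose proof (Hf (S n) (le_n _)). destruct (Nat.eq_dec i (S n)) as [->|Hne].
    + pose proof (sum_f_R0_nonneg f n (fun j Hj => Hf j ltac:(lia))). lra.
    + pose proof (IH (fun j Hj => Hf j ltac:(lia)) ltac:(lia)). lra.
Qed.

Lemma simplex_coord_bounds (n : nat) (p : simplex_pt n) (i : nat) :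
  0 <= proj1_sig p i <= 1.
Proof.
  destruct p as [x [Hnonneg [Hzero Hsum]]]; simpl. destruct (le_lt_dec i n).
  - split; auto. rewrite <- Hsum. apply sum_f_R0_term_le; auto.
  - rewrite Hzero; auto. lra.
Qed.

(** * Compactness of simplices *)

Definition is_filter {X : Type} (F : (X -> Prop) -> Prop) : Prop :=
  F (fun _ => True) /\ (forall A B, F A -> F B -> F (fun x => A x /\ B x)) /\
  (forall A B : X -> Prop, F A -> (forall x, A x -> B x) -> F B).

Section Filter.
Context {X : Type} (F : (X -> Prop) -> Prop) (HF : is_filter F).

Lemma filter_and (A B : X -> Prop) : F A -> F B -> F (fun x => A x /\ B x).
Proof. apply HF. Qed.

Lemma filter_mono (A B : X -> Prop) : F A -> (forall x, A x -> B x) -> F B.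
Proof. apply HF. Qed.

(* Sup argument on the right ends [s] up to which the estimate is uniform. *)
Lemma filter_forall_interval (H : X -> R -> Prop) (l u : R) : l <= u ->
  (forall s, l <= s <= u -> exists r, 0 < r /\
     F (fun x => forall s', Rabs (s' - s) < r -> H x s')) ->
  F (fun x => forall s, l <= s <= u -> H x s).
Proof.
  intros Hlu Hloc.
  set (E := fun s => l <= s <= u /\ F (fun x => forall s', l <= s' <= s -> H x s')).
  assert (El : E l).
  { split; [lra|]. destruct (Hloc l (conj (Rle_refl l) Hlu)) as (r & Hr & Hl).
    apply (filter_mono _ _ Hl). intros x Hx s' Hs'. apply Hx.
    replace (s' - l) with 0 by lra. rewrite Rabs_R0; lra. }
  assert (Eb : bound E) by (exists u; intros s [Hs _]; lra).
  destruct (completeness E Eb (ex_intro _ l El)) as [m [Hub Hleast]].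
  assert (Hlm : l <= m) by (apply Hub, El).
  assert (Hmu : m <= u) by (apply Hleast; intros s [Hs _]; lra).
  destruct (Hloc m (conj Hlm Hmu)) as (r & Hr & Hm).
  assert (Hnear : exists s, E s /\ m - r < s).
  { apply NNPP. intro Hno. assert (m <= m - r); [|lra]. apply Hleast. intros s Es.
    destruct (Rle_lt_dec s (m - r)); auto. exfalso; apply Hno; exists s; auto. }
  destruct Hnear as (s & [Hs Fs] & Hms).
  set (s2 := Rmin (m + r / 2) u).
  assert (Es2 : E s2).
  { split; [unfold s2; split; [apply Rmin_glb; lra|apply Rmin_r]|].
    apply (filter_mono _ _ (filter_and _ _ Hm Fs)). intros x [Hxm Hxs] s' Hs'.
    destruct (Rle_lt_dec s' s); [apply Hxs; lra|].
    apply Hxm. assert (s2 <= m + r / 2) by apply Rmin_l. apply Rabs_def1; lra. }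
  assert (Hs2u : s2 = u).
  { assert (Hs2m : s2 <= m) by (apply Hub, Es2). revert Hs2m. unfold s2.
    apply Rmin_case; lra. }
  apply (filter_mono _ _ (proj2 Es2)). intros x Hx s' Hs'. apply Hx. lra.
Qed.

End Filter.

Definition nbhd_prod_filter {X : Type} (F : (X -> Prop) -> Prop) (s0 : R)
  (W : X * R -> Prop) : Prop :=
  exists r, 0 < r /\ F (fun x => forall s, Rabs (s - s0) < r -> W (x, s)).

Lemma nbhd_prod_filter_is_filter {X : Type} (F : (X -> Prop) -> Prop) (s0 : R) :
  is_filter F -> is_filter (nbhd_prod_filter F s0).
Proof.
  intros HF. split; [|split].
  - exists 1. split; [lra|]. apply (filter_mono F HF (fun _ => True)); [apply HF|auto].
  - intros A B (r1 & Hr1 & HA) (r2 & Hr2 & HB). exists (Rmin r1 r2).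
    split; [apply Rmin_pos; auto|].
    apply (filter_mono F HF _ _ (filter_and F HF _ _ HA HB)). intros x [HxA HxB] s Hs.
    split; [apply HxA; eapply Rlt_le_trans; [exact Hs|apply Rmin_l]
           |apply HxB; eapply Rlt_le_trans; [exact Hs|apply Rmin_r]].
  - intros A B (r & Hr & HA) HAB. exists r. split; auto.
    apply (filter_mono F HF _ _ HA). auto.
Qed.

Definition cube (n : nat) (lo hi t : nat -> R) : Prop :=
  forall i, (i <= n)%nat -> lo i <= t i <= hi i.

Definition set_coord (t : nat -> R) (k : nat) (v : R) : nat -> R :=
  fun i => if Nat.eqb i k then v else t i.

Lemma set_coord_id (t : nat -> R) (k : nat) : set_coord t k (t k) = t.
Proof.
  apply functional_extensionality; intro i. unfold set_coord.
  destruct (Nat.eqb_spec i k); subst; auto.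
Qed.

Lemma sball_set_coord (n : nat) (t t' : nat -> R) (r s0 s : R) :
  sball n t r t' -> Rabs (s - s0) < r ->
  sball (S n) (set_coord t (S n) s0) r (set_coord t' (S n) s).
Proof.
  intros Ht Hs i Hi. unfold set_coord.
  destruct (Nat.eqb_spec i (S n)); [auto|apply Ht; lia].
Qed.

(* Induction on the dimension: the last coordinate is handled by
   [filter_forall_interval] for the product of [F] with neighbourhoods in R. *)
Lemma filter_forall_cube (n : nat) : forall (X : Type) (F : (X -> Prop) -> Prop),
  is_filter F -> forall (lo hi : nat -> R) (G : X -> (nat -> R) -> Prop),
  (forall i, (i <= n)%nat -> lo i <= hi i) ->
  (forall t, cube n lo hi t -> exists r, 0 < r /\
     F (fun x => forall t', sball n t r t' -> G x t')) ->
  F (fun x => forall t, cube n lo hi t -> G x t).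
Proof.
  induction n as [|n IH]; intros X F HF lo hi G Hlohi Hloc.
  - assert (Hint : F (fun x => forall s, lo 0%nat <= s <= hi 0%nat ->
                                   forall t, t 0%nat = s -> G x t)).
    { apply (filter_forall_interval F HF (fun x s => forall t, t 0%nat = s -> G x t)).
      { apply Hlohi, le_n. }
      intros s Hs. destruct (Hloc (fun _ => s)) as (r & Hr & Hs').
      { intros i Hi. replace i with 0%nat by lia. exact Hs. }
      exists r. split; auto. apply (filter_mono F HF _ _ Hs'). intros x Hx s' Hs'' t Ht.
      apply Hx. intros i Hi. replace i with 0%nat by lia. rewrite Ht. exact Hs''. }
    apply (filter_mono F HF _ _ Hint). intros x Hx t Ht. apply (Hx (t 0%nat)); auto.
  - assert (Hint : F (fun x => forall s, lo (S n) <= s <= hi (S n) ->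
                     forall t, cube n lo hi t -> G x (set_coord t (S n) s))).
    { apply (filter_forall_interval F HF
               (fun x s => forall t, cube n lo hi t -> G x (set_coord t (S n) s))).
      { apply Hlohi, le_n. }
      intros s0 Hs0.
      apply (IH (X * R)%type (nbhd_prod_filter F s0) (nbhd_prod_filter_is_filter F s0 HF)
               lo hi (fun xs t => G (fst xs) (set_coord t (S n) (snd xs)))).
      { intros i Hi; apply Hlohi; lia. }
      intros t Ht. destruct (Hloc (set_coord t (S n) s0)) as (r & Hr & Hnear).
      { intros i Hi. unfold set_coord. destruct (Nat.eqb_spec i (S n)); [subst; auto|].
        apply Ht; lia. }
      exists r. split; auto. exists r. split; auto.
      apply (filter_mono F HF _ _ Hnear). intros x Hx s Hs t' Ht'.
      apply Hx, sball_set_coord; auto. }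
    apply (filter_mono F HF _ _ Hint). intros x Hx t Ht.
    rewrite <- (set_coord_id t (S n)).
    apply Hx; [apply Ht, le_n|]. intros i Hi; apply Ht; lia.
Qed.

Lemma sum_f_R0_dist_lt (f g : nat -> R) (n : nat) (r : R) :
  (forall i, (i <= n)%nat -> Rabs (f i - g i) < r) ->
  Rabs (sum_f_R0 f n - sum_f_R0 g n) < (INR n + 1) * r.
Proof.
  induction n as [|n IH]; intros Hfg.
  - simpl. specialize (Hfg 0%nat (le_n _)). lra.
  - simpl sum_f_R0. rewrite S_INR.
    replace (sum_f_R0 f n + f (S n) - (sum_f_R0 g n + g (S n))) with
      ((sum_f_R0 f n - sum_f_R0 g n) + (f (S n) - g (S n))) by ring.
    eapply Rle_lt_trans; [apply Rabs_triang|].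
    assert (Rabs (sum_f_R0 f n - sum_f_R0 g n) < (INR n + 1) * r)
      by (apply IH; intros; apply Hfg; lia).
    specialize (Hfg (S n) (le_n _)). lra.
Qed.

Lemma simplex_complement_open (n : nat) (t : nat -> R) :
  ~ (exists q : simplex_pt n, forall i, (i <= n)%nat -> proj1_sig q i = t i) ->
  exists r, 0 < r /\ forall q : simplex_pt n, ~ sball n t r (proj1_sig q).
Proof.
  intros Hout.
  destruct (classic (exists i, (i <= n)%nat /\ t i < 0)) as [(i & Hi & Hti)|Hnonneg].
  - exists (- t i). split; [lra|]. intros [q [Hq Hq']] Hball. simpl in Hball.
    pose proof (Hball i Hi) as Hqi. specialize (Hq i Hi). apply Rabs_def2 in Hqi. lra.
  - destruct (Req_dec (sum_f_R0 t n) 1) as [Hsum|Hsum].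
    + exfalso. apply Hout.
      set (t' := fun i => if Nat.leb i n then t i else 0).
      assert (Ht' : forall i, (i <= n)%nat -> t' i = t i).
      { intros i Hi. unfold t'. destruct (Nat.leb_spec i n); [auto|lia]. }
      unshelve eexists (exist _ t' _); [|exact Ht']. split; [|split].
      * intros i Hi. rewrite Ht'; auto. destruct (Rle_lt_dec 0 (t i)); auto.
        exfalso; apply Hnonneg; eauto.
      * intros i Hi. unfold t'. destruct (Nat.leb_spec i n); [lia|auto].
      * rewrite <- Hsum. apply sum_eq. auto.
    + pose proof (pos_INR n) as Hn.
      exists (Rabs (sum_f_R0 t n - 1) / (INR n + 1)). split.
      { apply Rdiv_lt_0_compat; [apply Rabs_pos_lt|]; lra. }
      intros [q [Hq1 [Hq2 Hq]]] Hball. simpl in Hball.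
      pose proof (sum_f_R0_dist_lt _ t n _ Hball) as Hdist.
      replace ((INR n + 1) * (Rabs (sum_f_R0 t n - 1) / (INR n + 1))) with
        (Rabs (sum_f_R0 t n - 1)) in Hdist by (field; lra).
      rewrite Hq, <- Rabs_Ropp in Hdist.
      replace (- (1 - sum_f_R0 t n)) with (sum_f_R0 t n - 1) in Hdist by ring. lra.
Qed.

Lemma Rabs_le_inv (a b : R) : Rabs a <= b -> - b <= a <= b.
Proof. intro Hab. pose proof (Rle_abs a). pose proof (Rle_abs (- a)). rewrite Rabs_Ropp in *. lra. Qed.

Definition nbhd_filter (X : space) (x0 : X) (S : X -> Prop) : Prop :=
  exists V, opens X V /\ V x0 /\ forall x, V x -> S x.

Lemma nbhd_filter_is_filter (X : space) (x0 : X) :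
  is_topology X -> is_filter (nbhd_filter X x0).
Proof.
  intros (Hfull & Hinter & _). split; [|split].
  - exists (fun _ => True). auto.
  - intros A B (V1 & HV1 & Hx1 & H1) (V2 & HV2 & Hx2 & H2).
    exists (fun x => V1 x /\ V2 x). split; [apply Hinter; auto|]. split; auto.
    intros x [? ?]; auto.
  - intros A B (V & HV & Hx & HA) HAB. exists V. auto.
Qed.

Lemma tube_lemma (X : space) (n : nat) (G : X * simplex_pt n -> Prop) (x0 : X)
  (c : nat -> R) (r : R) : is_topology X -> opens (prod_space X (simplex n)) G -> 0 <= r ->
  (forall q : simplex_pt n,
     (forall i, (i <= n)%nat -> Rabs (proj1_sig q i - c i) <= r) -> G (x0, q)) ->
  nbhd_filter X x0 (fun x => forall q : simplex_pt n,
     (forall i, (i <= n)%nat -> Rabs (proj1_sig q i - c i) <= r) -> G (x, q)).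
Proof.
  intros HX HG Hr Hx0. pose proof (nbhd_filter_is_filter X x0 HX) as HF.
  assert (Hcube : nbhd_filter X x0 (fun x => forall t, cube n (fun i => c i - r)
             (fun i => c i + r) t -> forall q : simplex_pt n,
             (forall i, (i <= n)%nat -> proj1_sig q i = t i) -> G (x, q))).
  { apply filter_forall_cube; [exact HF|intros; lra|]. intros t Ht.
    destruct (classic (exists q : simplex_pt n, forall i, (i <= n)%nat -> proj1_sig q i = t i))
      as [[q Hq]|Hout].
    - assert (Gq : G (x0, q)).
      { apply Hx0. intros i Hi. rewrite Hq; auto. apply Rabs_le. specialize (Ht i Hi).
        simpl in Ht. lra. }
      destruct (HG _ Gq) as (A & B & HA & HB & Ha & Hb & HAB).
      destruct (HB q Hb) as [e [He HeB]].
      exists e. split; auto. exists A. split; auto. split; auto.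
      intros x Hx t' Ht' q' Hq'. apply (HAB (x, q')); auto. apply HeB.
      intros i Hi. rewrite Hq', Hq; auto.
    - destruct (simplex_complement_open n t Hout) as [e [He Hfar]].
      exists e. split; auto. exists (fun _ => True). split; [apply HX|]. split; auto.
      intros x _ t' Ht' q' Hq'. exfalso. apply (Hfar q'). intros i Hi.
      rewrite Hq'; auto. }
  apply (filter_mono _ HF _ _ Hcube). intros x Hx q Hq. apply (Hx (proj1_sig q)); auto.
  intros i Hi. specialize (Hq i Hi). apply Rabs_le_inv in Hq. lra.
Qed.

(** * Final families and products *)

(* [Q] carries the quotient topology of the disjoint union of the [X i]
   along the jointly surjective maps [f i]. *)
Definition final_family (Q : space) (I : Type) (X : I -> space) (f : forall i, X i -> Q)
  : Prop :=
  (forall i, is_topology (X i)) /\ (forall a : Q, exists i x, f i x = a) /\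
  (forall U, (forall i, opens (X i) (fun x => U (f i x))) -> opens Q U).

Lemma final_family_opens_full (Q : space) (I : Type) (X : I -> space) (f : forall i, X i -> Q) :
  final_family Q I X f -> opens Q (fun _ => True).
Proof. intros (HX & _ & Hfinal). apply Hfinal. intro i. apply (HX i). Qed.

(* Products with a simplex preserve final families: around a point, a
   neighbourhood in Q is obtained from the tube lemma applied in each [X i]
   to a closed ball of the simplex. *)
Lemma final_family_prod_simplex (Q : space) (I : Type) (X : I -> space)
  (f : forall i, X i -> Q) (n : nat) (O : Q * simplex_pt n -> Prop) :
  final_family Q I X f ->
  (forall i, opens (prod_space (X i) (simplex n)) (fun p => O (f i (fst p), snd p))) ->
  opens (prod_space Q (simplex n)) O.
Proof.
  intros (HX & Hsurj & Hfinal) HO [a0 t0] Ha0.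
  destruct (Hsurj a0) as (i0 & x0 & <-).
  destruct (HO i0 (x0, t0) Ha0) as (A & B & HA & HB & Hx0 & Ht0 & HAB).
  destruct (HB t0 Ht0) as [e [He HeB]].
  set (r := e / 2).
  exists (fun a => forall q : simplex_pt n,
            (forall i, (i <= n)%nat -> Rabs (proj1_sig q i - proj1_sig t0 i) <= r) -> O (a, q)).
  exists (fun q => sball n (proj1_sig t0) r (proj1_sig q)).
  split; [|split; [apply sball_open|split; [|split]]].
  - apply Hfinal. intro i. apply open_of_locally_open; [apply HX|]. intros x Hx.
    apply (tube_lemma (X i) n (fun p => O (f i (fst p), snd p))); auto.
    unfold r; lra.
  - intros q Hq. apply (HAB (x0, q)); auto. apply HeB. intros i Hi.
    specialize (Hq i Hi). unfold r in Hq. simpl. lra.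
  - apply sball_center. unfold r; lra.
  - intros [a q] Ha Hq. apply Ha. intros i Hi. left. apply Hq, Hi.
Qed.

Definition simplex_origin_fun : nat -> R := fun i => if Nat.eqb i 0 then 1 else 0.

Lemma simplex_origin_prop :
  (forall i, (i <= 0)%nat -> 0 <= simplex_origin_fun i) /\
  (forall i, (0 < i)%nat -> simplex_origin_fun i = 0) /\ sum_f_R0 simplex_origin_fun 0 = 1.
Proof.
  unfold simplex_origin_fun. split; [|split].
  - intros i Hi. destruct (Nat.eqb i 0); lra.
  - intros i Hi. destruct (Nat.eqb_spec i 0); [lia|auto].
  - reflexivity.
Qed.

Definition simplex_origin : simplex_pt 0 := exist _ simplex_origin_fun simplex_origin_prop.

Definition singular_index (I : Type) (X : I -> space) : Type :=
  {i : I & {m : nat & {s : simplex m -> X i | continuous _ _ s}}}.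

Lemma final_family_singular (Q : space) (I : Type) (X : I -> space) (f : forall i, X i -> Q) :
  final_family Q I X f -> (forall i, delta_generated (X i)) ->
  final_family Q (singular_index I X) (fun j => simplex (projT1 (projT2 j)))
    (fun j u => f (projT1 j) (proj1_sig (projT2 (projT2 j)) u)).
Proof.
  intros (_ & Hsurj & Hfinal) Hdg. split; [|split].
  - intro j. apply simplex_topology.
  - intro a. destruct (Hsurj a) as (i & x & <-).
    exists (existT _ i (existT _ 0%nat (exist _ (fun _ => x) (continuous_simplex_const 0 _ x)))).
    exists simplex_origin. reflexivity.
  - intros U HU. apply Hfinal. intro i. apply Hdg. intros m s Hs.
    exact (HU (existT _ i (existT _ m (exist _ s Hs)))).
Qed.

Lemma sum_f_R0_split (F : nat -> R) (a b : nat) :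
  sum_f_R0 F (a + S b) = sum_f_R0 F a + sum_f_R0 (fun j => F (S a + j)%nat) b.
Proof.
  induction b as [|b IH].
  - rewrite Nat.add_1_r. simpl. rewrite Nat.add_0_r. reflexivity.
  - replace (a + S (S b))%nat with (S (a + S b)) by lia. simpl sum_f_R0 at 1. rewrite IH.
    simpl. replace (S (a + S b)) with (S (S (a + b))) by lia.
    replace (a + S b)%nat with (S (a + b)) by lia. ring.
Qed.

Lemma sum_f_R0_blocks (F : nat -> R) (k m : nat) :
  sum_f_R0 F (k * S m + m) = sum_f_R0 (fun i => sum_f_R0 (fun j => F (i * S m + j)%nat) m) k.
Proof.
  induction k as [|k IH]; [reflexivity|].
  replace (S k * S m + m)%nat with ((k * S m + m) + S m)%nat by lia.
  rewrite sum_f_R0_split, IH. simpl (sum_f_R0 _ (S k)). f_equal.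
  apply sum_eq. intros j Hj. f_equal. lia.
Qed.

Lemma sum_f_R0_swap (G : nat -> nat -> R) (k m : nat) :
  sum_f_R0 (fun i => sum_f_R0 (fun j => G i j) m) k =
  sum_f_R0 (fun j => sum_f_R0 (fun i => G i j) k) m.
Proof.
  induction k as [|k IH]; [reflexivity|].
  simpl sum_f_R0 at 1. rewrite IH, <- plus_sum. apply sum_eq. reflexivity.
Qed.

Lemma div_mod_block (m i j : nat) : (j <= m)%nat ->
  ((i * S m + j) / S m = i /\ (i * S m + j) mod S m = j)%nat.
Proof.
  intro Hj. assert (Hdiv : ((i * S m + j) / S m = i)%nat).
  { rewrite Nat.div_add_l, Nat.div_small by lia. lia. }
  split; [exact Hdiv|].
  pose proof (Nat.div_mod (i * S m + j) (S m) ltac:(lia)). rewrite Hdiv in H. lia.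
Qed.

Lemma div_mod_block_bounds (k m r : nat) : (r <= k * S m + m)%nat ->
  (r / S m <= k /\ r mod S m <= m)%nat.
Proof.
  intro Hr. pose proof (Nat.div_mod r (S m) ltac:(lia)).
  pose proof (Nat.mod_upper_bound r (S m) ltac:(lia)).
  split; [|lia]. destruct (le_lt_dec (r / S m) k); [assumption|nia].
Qed.

Lemma Rabs_mul_sub_le (a a' b b' : R) : 0 <= a <= 1 -> 0 <= b' <= 1 ->
  Rabs (a' * b' - a * b) <= Rabs (a' - a) + Rabs (b' - b).
Proof.
  intros Ha Hb'. replace (a' * b' - a * b) with ((a' - a) * b' + a * (b' - b)) by ring.
  eapply Rle_trans; [apply Rabs_triang|]. rewrite !Rabs_mult.
  rewrite (Rabs_right b'), (Rabs_right a) by lra.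
  pose proof (Rabs_pos (a' - a)). pose proof (Rabs_pos (b' - b)).
  apply Rplus_le_compat; [rewrite <- (Rmult_1_r (Rabs (a' - a))) at 2
                         |rewrite <- (Rmult_1_l (Rabs (b' - b))) at 2];
    apply Rmult_le_compat; lra.
Qed.

(* The product of two simplices is a retract of a simplex: coordinate [r] of
   the big simplex stands for the pair [(r / S m, r mod S m)]; a pair of points
   goes to its product distribution, and a point comes back through its two
   marginals. *)
Section SimplexProduct.
Variables k m : nat.

Definition prod_dim : nat := k * S m + m.

Definition prod_coords (a b : nat -> R) : nat -> R :=
  fun r => a (r / S m)%nat * b (r mod S m)%nat.

Lemma prod_coords_prop (a : simplex_pt k) (b : simplex_pt m) :
  (forall r, (r <= prod_dim)%nat -> 0 <= prod_coords (proj1_sig a) (proj1_sig b) r) /\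
  (forall r, (prod_dim < r)%nat -> prod_coords (proj1_sig a) (proj1_sig b) r = 0) /\
  sum_f_R0 (prod_coords (proj1_sig a) (proj1_sig b)) prod_dim = 1.
Proof.
  unfold prod_coords, prod_dim. split; [|split].
  - intros r _. pose proof (simplex_coord_bounds _ a (r / S m)).
    pose proof (simplex_coord_bounds _ b (r mod S m)). apply Rmult_le_pos; lra.
  - intros r Hr. destruct a as [x [Hx1 [Hx2 Hx3]]]; cbn [proj1_sig].
    rewrite Hx2; [ring|]. destruct (le_lt_dec (r / S m) k); [|assumption].
    pose proof (Nat.div_mod r (S m) ltac:(lia)).
    pose proof (Nat.mod_upper_bound r (S m) ltac:(lia)). nia.
  - rewrite sum_f_R0_blocks.
    destruct a as [x [Hx1 [Hx2 Hx3]]], b as [y [Hy1 [Hy2 Hy3]]]. cbn [proj1_sig].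
    rewrite <- Hx3. apply sum_eq. intros i Hi.
    rewrite <- (Rmult_1_r (x i)), <- Hy3, scal_sum. apply sum_eq.
    intros j Hj. destruct (div_mod_block m i j Hj) as [-> ->]. ring.
Qed.

Definition prod_pt (a : simplex_pt k) (b : simplex_pt m) : simplex_pt prod_dim :=
  exist _ _ (prod_coords_prop a b).

Definition marginal_l_coords (T : nat -> R) : nat -> R :=
  fun i => if Nat.leb i k then sum_f_R0 (fun j => T (i * S m + j)%nat) m else 0.
Definition marginal_r_coords (T : nat -> R) : nat -> R :=
  fun j => if Nat.leb j m then sum_f_R0 (fun i => T (i * S m + j)%nat) k else 0.

Lemma marginal_l_prop (T : simplex_pt prod_dim) :
  (forall i, (i <= k)%nat -> 0 <= marginal_l_coords (proj1_sig T) i) /\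
  (forall i, (k < i)%nat -> marginal_l_coords (proj1_sig T) i = 0) /\
  sum_f_R0 (marginal_l_coords (proj1_sig T)) k = 1.
Proof.
  unfold marginal_l_coords. split; [|split].
  - intros i Hi. destruct (Nat.leb i k); [|lra].
    apply sum_f_R0_nonneg. intros. apply simplex_coord_bounds.
  - intros i Hi. destruct (Nat.leb_spec i k); [lia|reflexivity].
  - destruct T as [x [Hx1 [Hx2 Hx3]]]; simpl. rewrite <- Hx3. unfold prod_dim.
    rewrite sum_f_R0_blocks. apply sum_eq. intros i Hi.
    destruct (Nat.leb_spec i k); [reflexivity|lia].
Qed.

Lemma marginal_r_prop (T : simplex_pt prod_dim) :
  (forall j, (j <= m)%nat -> 0 <= marginal_r_coords (proj1_sig T) j) /\
  (forall j, (m < j)%nat -> marginal_r_coords (proj1_sig T) j = 0) /\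
  sum_f_R0 (marginal_r_coords (proj1_sig T)) m = 1.
Proof.
  unfold marginal_r_coords. split; [|split].
  - intros j Hj. destruct (Nat.leb j m); [|lra].
    apply sum_f_R0_nonneg. intros. apply simplex_coord_bounds.
  - intros j Hj. destruct (Nat.leb_spec j m); [lia|reflexivity].
  - destruct T as [x [Hx1 [Hx2 Hx3]]]; simpl. rewrite <- Hx3. unfold prod_dim.
    rewrite sum_f_R0_blocks, sum_f_R0_swap. apply sum_eq. intros j Hj.
    destruct (Nat.leb_spec j m); [reflexivity|lia].
Qed.

Definition marginal_l (T : simplex_pt prod_dim) : simplex_pt k := exist _ _ (marginal_l_prop T).
Definition marginal_r (T : simplex_pt prod_dim) : simplex_pt m := exist _ _ (marginal_r_prop T).

Lemma INR_succ_pos (n : nat) : 0 < INR n + 1.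
Proof. pose proof (pos_INR n); lra. Qed.

Lemma continuous_marginal_l : continuous (simplex prod_dim) (simplex k) marginal_l.
Proof.
  intros U HU T HT. destruct (HU _ HT) as [e [He HeU]].
  pose proof (INR_succ_pos m) as Hm.
  exists (e / (INR m + 1)). split; [apply Rdiv_lt_0_compat; lra|].
  intros T' HT'. apply HeU. intros i Hi. simpl. unfold marginal_l_coords.
  destruct (Nat.leb_spec i k); [|lia].
  replace e with ((INR m + 1) * (e / (INR m + 1))) by (field; lra).
  apply sum_f_R0_dist_lt. intros j Hj. apply HT'. unfold prod_dim. nia.
Qed.

Lemma continuous_marginal_r : continuous (simplex prod_dim) (simplex m) marginal_r.
Proof.
  intros U HU T HT. destruct (HU _ HT) as [e [He HeU]].
  pose proof (INR_succ_pos k) as Hk.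
  exists (e / (INR k + 1)). split; [apply Rdiv_lt_0_compat; lra|].
  intros T' HT'. apply HeU. intros j Hj. simpl. unfold marginal_r_coords.
  destruct (Nat.leb_spec j m); [|lia].
  replace e with ((INR k + 1) * (e / (INR k + 1))) by (field; lra).
  apply sum_f_R0_dist_lt. intros i Hi. apply HT'. unfold prod_dim. nia.
Qed.

Lemma marginal_l_prod_pt (a : simplex_pt k) (b : simplex_pt m) : marginal_l (prod_pt a b) = a.
Proof.
  apply simplex_pt_eq, functional_extensionality; intro i. cbn.
  unfold marginal_l_coords, prod_coords. destruct (Nat.leb_spec i k).
  - destruct b as [y [Hy1 [Hy2 Hy3]]]; cbn [proj1_sig].
    transitivity (proj1_sig a i * sum_f_R0 y m); [|rewrite Hy3; ring].
    rewrite scal_sum. apply sum_eq. intros j Hj. destruct (div_mod_block m i j Hj) as [-> ->].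
    ring.
  - destruct a as [x [Hx1 [Hx2 Hx3]]]; cbn [proj1_sig]. rewrite Hx2; auto.
Qed.

Lemma marginal_r_prod_pt (a : simplex_pt k) (b : simplex_pt m) : marginal_r (prod_pt a b) = b.
Proof.
  apply simplex_pt_eq, functional_extensionality; intro j. cbn.
  unfold marginal_r_coords, prod_coords. destruct (Nat.leb_spec j m) as [Hj|Hj].
  - destruct a as [x [Hx1 [Hx2 Hx3]]]; cbn [proj1_sig].
    transitivity (proj1_sig b j * sum_f_R0 x k); [|rewrite Hx3; ring].
    rewrite scal_sum. apply sum_eq. intros i Hi. destruct (div_mod_block m i j Hj) as [-> ->].
    ring.
  - destruct b as [y [Hy1 [Hy2 Hy3]]]; cbn [proj1_sig]. rewrite Hy2; auto.
Qed.

Lemma sball_prod_pt (a a' : simplex_pt k) (b b' : simplex_pt m) (e : R) :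
  sball k (proj1_sig a) (e / 2) (proj1_sig a') -> sball m (proj1_sig b) (e / 2) (proj1_sig b') ->
  sball prod_dim (proj1_sig (prod_pt a b)) e (proj1_sig (prod_pt a' b')).
Proof.
  intros Ha Hb r Hr. cbn. unfold prod_coords.
  destruct (div_mod_block_bounds k m r Hr) as [Hi Hj].
  eapply Rle_lt_trans; [apply Rabs_mul_sub_le; apply simplex_coord_bounds|].
  specialize (Ha _ Hi). specialize (Hb _ Hj). lra.
Qed.

Lemma opens_simplex_prod (O : simplex_pt k * simplex_pt m -> Prop) :
  delta_opens (prod_space (simplex k) (simplex m)) O ->
  opens (prod_space (simplex k) (simplex m)) O.
Proof.
  intros HO [a b] Hab.
  assert (Hmarg := continuous_simplex_pair _ _ _ _ _ continuous_marginal_l continuous_marginal_r).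
  assert (Hprod : O (marginal_l (prod_pt a b), marginal_r (prod_pt a b)))
    by (rewrite marginal_l_prod_pt, marginal_r_prod_pt; exact Hab).
  destruct (HO _ _ Hmarg _ Hprod) as [e [He HeO]].
  exists (fun a' => sball k (proj1_sig a) (e / 2) (proj1_sig a')),
         (fun b' => sball m (proj1_sig b) (e / 2) (proj1_sig b')).
  split; [apply sball_open|]. split; [apply sball_open|].
  split; [apply sball_center; lra|]. split; [apply sball_center; lra|].
  intros [a' b'] Ha' Hb'.
  replace (a', b') with (marginal_l (prod_pt a' b'), marginal_r (prod_pt a' b'))
    by (rewrite marginal_l_prod_pt, marginal_r_prod_pt; reflexivity).
  apply HeO, sball_prod_pt; assumption.
Qed.

End SimplexProduct.

Lemma final_family_prod_simplex_singular (Q : space) (I : Type) (X : I -> space)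
  (f : forall i, X i -> Q) (n : nat) (O : Q * simplex_pt n -> Prop) :
  final_family Q I X f -> (forall i, delta_generated (X i)) ->
  (forall i m (s : simplex m -> X i), continuous _ _ s ->
     opens (prod_space (simplex m) (simplex n)) (fun p => O (f i (s (fst p)), snd p))) ->
  opens (prod_space Q (simplex n)) O.
Proof.
  intros HF Hdg HO.
  apply (final_family_prod_simplex _ _ _ _ n O (final_family_singular Q I X f HF Hdg)).
  intros [i [m [s Hs]]]. exact (HO i m s Hs).
Qed.

(* In Delta-generated spaces a product of final families is final: a singular
   simplex of [Q1 * Q2] is tested one factor at a time, using that products
   with a simplex preserve final families, and [opens_simplex_prod] at the end. *)
Lemma delta_opens_prod_final (Q1 Q2 : space) (I1 I2 : Type) (X1 : I1 -> space)
  (X2 : I2 -> space) (f1 : forall i, X1 i -> Q1) (f2 : forall j, X2 j -> Q2)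
  (W : Q1 * Q2 -> Prop) :
  final_family Q1 I1 X1 f1 -> final_family Q2 I2 X2 f2 ->
  (forall i, delta_generated (X1 i)) -> (forall j, delta_generated (X2 j)) ->
  (forall i j, delta_opens (prod_space (X1 i) (X2 j))
                 (fun p => W (f1 i (fst p), f2 j (snd p)))) ->
  delta_opens (prod_space Q1 Q2) W.
Proof.
  intros HF1 HF2 Hdg1 Hdg2 HW n s Hs.
  pose proof (final_family_opens_full _ _ _ _ HF1) as Hfull1.
  pose proof (final_family_opens_full _ _ _ _ HF2) as Hfull2.
  assert (Hs1 : continuous (simplex n) Q1 (fun u => fst (s u)))
    by exact (continuous_comp _ _ _ s fst Hs (continuous_fst Q1 Q2 Hfull2)).
  assert (Hs2 : continuous (simplex n) Q2 (fun u => snd (s u)))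
    by exact (continuous_comp _ _ _ s snd Hs (continuous_snd Q1 Q2 Hfull1)).
  assert (Hsimplices : forall i j m k (s1 : simplex m -> X1 i) (s2 : simplex k -> X2 j),
    continuous _ _ s1 -> continuous _ _ s2 ->
    opens (prod_space (simplex k) (simplex m)) (fun p => W (f1 i (s1 (snd p)), f2 j (s2 (fst p))))).
  { intros i j m k s1 s2 Hs1' Hs2'. apply opens_simplex_prod. intros N h Hh.
    apply (HW i j N (fun u => (s1 (snd (h u)), s2 (fst (h u))))).
    apply continuous_simplex_pair.
    - apply (continuous_comp _ _ _ (fun u => snd (h u)) s1); [|assumption].
      apply (continuous_comp _ _ _ h snd Hh), continuous_snd, simplex_topology.
    - apply (continuous_comp _ _ _ (fun u => fst (h u)) s2); [|assumption].
      apply (continuous_comp _ _ _ h fst Hh), continuous_fst, simplex_topology. }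
  assert (Hleft : forall i m (s1 : simplex m -> X1 i), continuous _ _ s1 ->
    opens (prod_space (simplex m) Q2) (fun p => W (f1 i (s1 (fst p)), snd p))).
  { intros i m s1 Hs1'.
    apply (opens_ext _ _ _ (opens_prod_swap Q2 (simplex m) (fun p => W (f1 i (s1 (snd p)), fst p))
             (final_family_prod_simplex_singular _ _ _ _ m _ HF2 Hdg2
                (fun j k s2 Hs2' => Hsimplices i j m k s1 s2 Hs1' Hs2')))).
    intros [v b]. reflexivity. }
  assert (Hslice : opens (prod_space Q1 (simplex n)) (fun p => W (fst p, snd (s (snd p))))).
  { apply (final_family_prod_simplex_singular _ _ _ _ n _ HF1 Hdg1).
    intros i m s1 Hs1'.
    exact (continuous_prod_map _ _ _ _ (fun v => v) (fun u => snd (s u))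
             (continuous_id _) Hs2 _ (Hleft i m s1 Hs1')). }
  apply (opens_ext _ _ _ (continuous_simplex_pair n _ _ _ (fun u => u) Hs1
                            (continuous_id _) _ Hslice)).
  intro u. simpl. rewrite <- surjective_pairing. reflexivity.
Qed.

(** * Colimits and the tensor product *)

Lemma cls_proj1 {X : Type} (Rl : X -> X -> Prop) (z : quot Rl) : cls Rl (proj1_sig z) = z.
Proof.
  destruct z as [x Hx]. unfold cls. apply eq_sig_hprop; [intros; apply proof_irrelevance|].
  exact Hx.
Qed.

Lemma cls_rel {X : Type} (Rl : X -> X -> Prop) (x y : X) : Rl x y -> cls Rl x = cls Rl y.
Proof.
  intro Hxy. unfold cls. apply eq_sig_hprop; [intros; apply proof_irrelevance|].
  apply canon_eq, ec_base, Hxy.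
Qed.

Lemma eqclos_resp {X Y : Type} (Rl : X -> X -> Prop) (g : X -> Y) :
  (forall x y, Rl x y -> g x = g y) -> forall x y, eqclos Rl x y -> g x = g y.
Proof. intros Hg x y Hxy. induction Hxy; auto; congruence. Qed.

Lemma resp_proj1_cls {X Y : Type} (Rl : X -> X -> Prop) (g : X -> Y) :
  (forall x y, Rl x y -> g x = g y) -> forall x, g (proj1_sig (cls Rl x)) = g x.
Proof. intros Hg x. symmetry. apply (eqclos_resp Rl g Hg), canon_spec. Qed.

Section Reparam.
Context {P : rcat} (HP : is_reparam P).

Lemma comp_assoc (a b c d : obj P) (f : hom a b) (g : hom b c) (h : hom c d) :
  Defs.comp h (Defs.comp g f) = Defs.comp (Defs.comp h g) f.
Proof. destruct HP as (_ & H & _). apply H. Qed.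

Lemma comp_id_l (a b : obj P) (f : hom a b) : Defs.comp (idm b) f = f.
Proof. destruct HP as (_ & _ & H & _). apply H. Qed.

Lemma comp_id_r (a b : obj P) (f : hom a b) : Defs.comp f (idm a) = f.
Proof. destruct HP as (_ & _ & _ & H & _). apply H. Qed.

Lemma hom_opens_full (a b : obj P) : opens (hom a b) (fun _ => True).
Proof. apply opens_full_of_delta_generated. destruct HP as (H & _). apply H. Qed.

End Reparam.

Section PSpace.
Context {P : rcat} (F : pspace P) (HF : is_pspace F).

Lemma pact_id (a : obj P) (x : pob F a) : pact F (idm a) x = x.
Proof. destruct HF as (_ & _ & H & _). apply H. Qed.

Lemma pob_delta_generated (l : obj P) : delta_generated (pob F l).
Proof. destruct HF as (H & _). apply H. Qed.

End PSpace.

Definition colim_in {P : rcat} (F : pspace P) (l : obj P) (x : pob F l) : colim F :=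
  cls (colim_rel F) (existT (fun l => carrier (pob F l)) l x).

Lemma colim_in_surj {P : rcat} (F : pspace P) (z : colim F) :
  exists l x, z = colim_in F l x.
Proof.
  rewrite <- (cls_proj1 _ z). destruct (proj1_sig z) as [l x]. exists l, x. reflexivity.
Qed.

Lemma colim_in_act {P : rcat} (F : pspace P) (a b : obj P) (f : hom a b) (x : pob F b) :
  colim_in F a (pact F f x) = colim_in F b x.
Proof. apply cls_rel. exists a, b, f, x. split; reflexivity. Qed.

Lemma continuous_colim_in {P : rcat} (F : pspace P) (l : obj P) :
  continuous (pob F l) (colim F) (colim_in F l).
Proof. intros U HU. exact (HU l). Qed.

Lemma colim_final_family {P : rcat} (F : pspace P) : is_pspace F ->
  final_family (colim F) (obj P) (pob F) (colim_in F).
Proof.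
  intros HF. split; [|split].
  - intro l. apply pob_delta_generated, HF.
  - intro z. destruct (colim_in_surj F z) as (l & x & ->). eauto.
  - intros U HU. exact HU.
Qed.

Lemma colim_map_in {P : rcat} (D D' : pspace P) (eta : forall l, pob D l -> pob D' l) :
  is_pmorph D D' eta -> forall l x, colim_map eta (colim_in D l x) = colim_in D' l (eta l x).
Proof.
  intros [_ Hnat] l x. unfold colim_map.
  apply (resp_proj1_cls (colim_rel D) (fun w => cls (colim_rel D')
     (match w with existT _ l x => existT (fun l => carrier (pob D' l)) l (eta l x) end))).
  intros u v (a & b & f & y & -> & ->). rewrite Hnat. apply colim_in_act.
Qed.

Section Tensor.
Context {P : rcat} (HP : is_reparam P) (D E : pspace P).

Definition tens_in (l l1 l2 : obj P) (phi : hom l (tens l1 l2)) (x : pob D l1) (y : pob E l2)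
  : tens_ob D E l :=
  cls (tens_rel D E l) (existT (fun p => carrier (tpiece D E l p)) (l1, l2) ((phi, x), y)).

Lemma tens_in_surj (l : obj P) (q : tens_ob D E l) :
  exists l1 l2 phi x y, q = tens_in l l1 l2 phi x y.
Proof.
  rewrite <- (cls_proj1 _ q). destruct (proj1_sig q) as [[l1 l2] [[phi x] y]].
  exists l1, l2, phi, x, y. reflexivity.
Qed.

Lemma tens_in_act (l l1 l2 l1' l2' : obj P) (al : hom l1 l1') (be : hom l2 l2')
  (phi : hom l (tens l1 l2)) (x : pob D l1') (y : pob E l2') :
  tens_in l l1' l2' (Defs.comp (tensm al be) phi) x y = tens_in l l1 l2 phi (pact D al x) (pact E be y).
Proof. apply cls_rel. exists l1, l2, l1', l2', al, be, phi, x, y. split; reflexivity. Qed.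

Lemma tens_act_in (a b l1 l2 : obj P) (psi : hom a b) (phi : hom b (tens l1 l2))
  (x : pob D l1) (y : pob E l2) :
  tens_act D E a b psi (tens_in b l1 l2 phi x y) = tens_in a l1 l2 (Defs.comp phi psi) x y.
Proof.
  unfold tens_act.
  apply (resp_proj1_cls (tens_rel D E b) (fun w => cls (tens_rel D E a)
    (match w with existT _ p t => existT (fun p => carrier (tpiece D E a p)) p
                                   ((Defs.comp (fst (fst t)) psi, snd (fst t)), snd t) end))).
  intros u v (l1' & l2' & l1'' & l2'' & al & be & phi' & x' & y' & -> & ->). cbn.
  rewrite <- (comp_assoc HP). apply (tens_in_act a).
Qed.

Lemma colim_in_tens_act (a b : obj P) (psi : hom a b) (q : tens_ob D E b) :
  colim_in (ptensor D E) a (tens_act D E a b psi q) = colim_in (ptensor D E) b q.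
Proof. exact (colim_in_act (ptensor D E) a b psi q). Qed.

Definition tens_unit (l1 l2 : obj P) (x : pob D l1) (y : pob E l2) : colim (ptensor D E) :=
  colim_in (ptensor D E) (tens l1 l2) (tens_in (tens l1 l2) l1 l2 (idm _) x y).

Lemma tens_unit_act (l1 l2 l1' l2' : obj P) (al : hom l1 l1') (be : hom l2 l2')
  (x : pob D l1') (y : pob E l2') :
  tens_unit l1 l2 (pact D al x) (pact E be y) = tens_unit l1' l2' x y.
Proof.
  unfold tens_unit. rewrite <- tens_in_act, (comp_id_r HP), <- (comp_id_l HP _ _ (tensm al be)).
  rewrite <- tens_act_in. apply colim_in_tens_act.
Qed.

Lemma colim_in_tens_in (l l1 l2 : obj P) (phi : hom l (tens l1 l2)) (x : pob D l1)
  (y : pob E l2) : colim_in (ptensor D E) l (tens_in l l1 l2 phi x y) = tens_unit l1 l2 x y.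
Proof.
  unfold tens_unit. rewrite <- colim_in_tens_act with (psi := phi), tens_act_in, (comp_id_l HP).
  reflexivity.
Qed.

End Tensor.

Section ColimTensor.
Context {P : rcat} (HP : is_reparam P).

Definition tens_piece_to_prod (D E : pspace P) (l : obj P)
  (w : {p : obj P * obj P & carrier (tpiece D E l p)}) : colim D * colim E :=
  match w with existT _ p t => (colim_in D (fst p) (snd (fst t)), colim_in E (snd p) (snd t)) end.

Definition colim_tensor_to_prod (D E : pspace P) (z : colim (ptensor D E))
  : dprod (colim D) (colim E) :=
  match proj1_sig z with existT _ l q => tens_piece_to_prod D E l (proj1_sig q) end.

Definition tens_unit_of_reps (D E : pspace P) (u : {l : obj P & carrier (pob D l)})
  (v : {l : obj P & carrier (pob E l)}) : colim (ptensor D E) :=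
  match u, v with existT _ l1 x, existT _ l2 y => tens_unit D E l1 l2 x y end.

Definition prod_to_colim_tensor (D E : pspace P) (ab : dprod (colim D) (colim E))
  : colim (ptensor D E) :=
  tens_unit_of_reps D E (proj1_sig (fst ab)) (proj1_sig (snd ab)).

Lemma tens_piece_to_prod_in (D E : pspace P) (l l1 l2 : obj P) (phi : hom l (tens l1 l2))
  (x : pob D l1) (y : pob E l2) :
  tens_piece_to_prod D E l (proj1_sig (tens_in D E l l1 l2 phi x y)) =
  (colim_in D l1 x, colim_in E l2 y).
Proof.
  apply (resp_proj1_cls _ (tens_piece_to_prod D E l)).
  intros u v (l1' & l2' & l1'' & l2'' & al & be & phi' & x' & y' & -> & ->). cbn.
  rewrite !colim_in_act. reflexivity.
Qed.

Lemma colim_tensor_to_prod_in (D E : pspace P) (l l1 l2 : obj P) (phi : hom l (tens l1 l2))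
  (x : pob D l1) (y : pob E l2) :
  colim_tensor_to_prod D E (colim_in (ptensor D E) l (tens_in D E l l1 l2 phi x y)) =
  (colim_in D l1 x, colim_in E l2 y).
Proof.
  transitivity (tens_piece_to_prod D E l (proj1_sig (tens_in D E l l1 l2 phi x y)));
    [|apply tens_piece_to_prod_in].
  apply (resp_proj1_cls _ (fun w => match w with existT _ l q =>
           tens_piece_to_prod D E l (proj1_sig q) end)).
  intros u v (a & b & f & q & -> & ->). cbn [pact ptensor].
  destruct (tens_in_surj D E b q) as (l1' & l2' & phi' & x' & y' & ->).
  rewrite (tens_act_in HP), !tens_piece_to_prod_in. reflexivity.
Qed.

Lemma prod_to_colim_tensor_in (D E : pspace P) (l1 l2 : obj P) (x : pob D l1) (y : pob E l2) :
  is_pspace D -> is_pspace E ->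
  prod_to_colim_tensor D E (colim_in D l1 x, colim_in E l2 y) = tens_unit D E l1 l2 x y.
Proof.
  intros HD HE. unfold prod_to_colim_tensor; cbn [fst snd].
  transitivity (tens_unit_of_reps D E (existT _ l1 x) (proj1_sig (colim_in E l2 y))).
  - apply (resp_proj1_cls _ (fun u => tens_unit_of_reps D E u (proj1_sig (colim_in E l2 y)))).
    intros u u' (a & b & f & x' & -> & ->). destruct (proj1_sig (colim_in E l2 y)) as [l2' y'].
    cbn. rewrite <- (pact_id E HE l2' y') at 1. apply (tens_unit_act HP).
  - apply (resp_proj1_cls _ (tens_unit_of_reps D E (existT _ l1 x))).
    intros v v' (a & b & g & y' & -> & ->). cbn.
    rewrite <- (pact_id D HD l1 x) at 1. apply (tens_unit_act HP).
Qed.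

Lemma colim_tensor_to_prodK (D E : pspace P) : is_pspace D -> is_pspace E ->
  forall z, prod_to_colim_tensor D E (colim_tensor_to_prod D E z) = z.
Proof.
  intros HD HE z.
  destruct (colim_in_surj _ z) as (l & q & ->).
  destruct (tens_in_surj D E l q) as (l1 & l2 & phi & x & y & ->).
  rewrite colim_tensor_to_prod_in, prod_to_colim_tensor_in by assumption.
  symmetry. apply (colim_in_tens_in HP).
Qed.

Lemma prod_to_colim_tensorK (D E : pspace P) : is_pspace D -> is_pspace E ->
  forall ab, colim_tensor_to_prod D E (prod_to_colim_tensor D E ab) = ab.
Proof.
  intros HD HE [a b].
  destruct (colim_in_surj D a) as (l1 & x & ->), (colim_in_surj E b) as (l2 & y & ->).
  rewrite prod_to_colim_tensor_in by assumption. apply colim_tensor_to_prod_in.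
Qed.

(* [z] is destructed down to a raw representative, on which both sides
   compute; this avoids having to show that [tens_map eta theta] is itself a
   morphism of P-spaces. *)
Lemma colim_tensor_to_prod_natural (D D' E E' : pspace P)
  (eta : forall l, pob D l -> pob D' l) (theta : forall l, pob E l -> pob E' l) :
  is_pmorph D D' eta -> is_pmorph E E' theta -> forall z,
  colim_tensor_to_prod D' E' (colim_map (tens_map eta theta) z) =
  (colim_map eta (fst (colim_tensor_to_prod D E z)),
   colim_map theta (snd (colim_tensor_to_prod D E z))).
Proof.
  intros Heta Htheta [[l [[[l1 l2] [[phi x] y]] Hq]] Hz].
  change (colim_tensor_to_prod D' E' (colim_in (ptensor D' E') l
            (tens_in D' E' l l1 l2 phi (eta l1 x) (theta l2 y))) =
          (colim_map eta (colim_in D l1 x), colim_map theta (colim_in E l2 y))).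
  rewrite colim_tensor_to_prod_in, !colim_map_in by assumption. reflexivity.
Qed.

End ColimTensor.

Section Continuity.
Context {P : rcat} (HP : is_reparam P) (D E : pspace P) (HD : is_pspace D) (HE : is_pspace E).

Lemma continuous_colim_tensor_to_prod :
  continuous (colim (ptensor D E)) (dprod (colim D) (colim E)) (colim_tensor_to_prod D E).
Proof.
  intros U HU l [l1 l2].
  apply (opens_ext (tpiece D E l (l1, l2))
           (fun t => U (colim_in D l1 (snd (fst t)), colim_in E l2 (snd t)))).
  2:{ intros [[phi x] y]. cbn [fst snd].
       rewrite <- (colim_tensor_to_prod_in HP D E l l1 l2 phi x y). reflexivity. }
  intros n s Hs. apply HU. apply continuous_simplex_pair.
  - apply (continuous_comp _ _ _ (fun u => snd (fst (s u))) (colim_in D l1));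
      [|apply continuous_colim_in].
    apply (continuous_comp _ (dprod (hom l (tens l1 l2)) (pob D l1)) _ (fun u => fst (s u)) snd).
    + apply (continuous_comp _ _ _ s fst Hs), continuous_fst, opens_full_of_delta_generated.
      apply pob_delta_generated, HE.
    + apply continuous_deltaify_l, continuous_snd, (hom_opens_full HP).
  - apply (continuous_comp _ _ _ (fun u => snd (s u)) (colim_in E l2));
      [|apply continuous_colim_in].
    apply (continuous_comp _ _ _ s snd Hs), continuous_snd, opens_deltaify_full.
Qed.

Lemma continuous_prod_to_colim_tensor :
  continuous (dprod (colim D) (colim E)) (colim (ptensor D E)) (prod_to_colim_tensor D E).
Proof.
  intros V HV.
  apply (delta_opens_prod_final _ _ _ _ _ _ _ _ _ (colim_final_family D HD)
           (colim_final_family E HE) (pob_delta_generated D HD) (pob_delta_generated E HE)).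
  intros i j.
  apply (opens_ext (deltaify (prod_space (pob D i) (pob E j)))
           (fun p => V (tens_unit D E i j (fst p) (snd p)))).
  2:{ intro p. rewrite (prod_to_colim_tensor_in HP) by assumption. reflexivity. }
  intros n s Hs.
  apply (HV (tens i j) (i, j) n (fun u => ((idm (tens i j), fst (s u)), snd (s u)))).
  apply continuous_simplex_pair.
  - apply continuous_simplex_deltaify, continuous_simplex_pair; [apply continuous_simplex_const|].
    apply (continuous_comp _ _ _ s fst Hs), continuous_fst, opens_full_of_delta_generated.
    apply pob_delta_generated, HE.
  - apply (continuous_comp _ _ _ s snd Hs), continuous_snd, opens_full_of_delta_generated.
    apply pob_delta_generated, HD.
Qed.

End Continuity.

Theorem proposition3p10 (P : rcat) (HP : is_reparam P) :
  exists Phi : forall D E : pspace P,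
      colim (ptensor D E) -> dprod (colim D) (colim E),
    (forall D E : pspace P, is_pspace D -> is_pspace E ->
       homeomorphism (colim (ptensor D E)) (dprod (colim D) (colim E)) (Phi D E)) /\
    (forall (D D' E E' : pspace P)
            (eta : forall l, pob D l -> pob D' l)
            (theta : forall l, pob E l -> pob E' l),
       is_pspace D -> is_pspace D' -> is_pspace E -> is_pspace E' ->
       is_pmorph D D' eta -> is_pmorph E E' theta ->
       forall z : colim (ptensor D E),
         Phi D' E' (colim_map (tens_map eta theta) z) =
         (colim_map eta (fst (Phi D E z)), colim_map theta (snd (Phi D E z)))).
Proof.
  exists (colim_tensor_to_prod (P := P)). split.
  - intros D E HD HE. exists (prod_to_colim_tensor D E).
    split; [apply (colim_tensor_to_prodK HP D E HD HE)|].
    split; [apply (prod_to_colim_tensorK HP D E HD HE)|].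
    split; [apply (continuous_colim_tensor_to_prod HP D E HE)
           |apply (continuous_prod_to_colim_tensor HP D E HD HE)].
  - intros D D' E E' eta theta _ _ _ _ Heta Htheta.
    apply colim_tensor_to_prod_natural; assumption.
Qed.
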